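(* Let $\mathcal{A}=(a_{ijk})\in\mathbb{R}^{n\times n\times n}$ be a piezoelectric-type tensor. Define the fourth-order tensor $\mathcal{B}=(b_{i_1i_2i_3i_4})\in\mathbb{R}^{n\times n\times n\times n}$ by $b_{i_1i_2i_3i_4}=\sum_{i=1}^n a_{ii_1i_2}a_{ii_3i_4}$ for all $i_1,i_2,i_3,i_4\in\{1,\dots,n\}$, and the tensor $\bar{\mathcal{B}}=(\bar b_{i_1i_2i_3i_4})$ by $$\bar b_{i_1i_2i_3i_4}=\tfrac13\big(b_{i_1i_2i_3i_4}+b_{i_1i_3i_2i_4}+b_{i_1i_4i_2i_3}\big).$$ Then $\bar{\mathcal{B}}$ is positive semi-definite, i.e. $$\bar{\mathcal{B}}\mathbf{x}^4=\sum_{i_1,i_2,i_3,i_4=1}^n \bar b_{i_1i_2i_3i_4}x_{i_1}x_{i_2}x_{i_3}x_{i_4}\ge 0\quad\text{for all }\mathbf{x}\in\mathbb{R}^n.$$ Consequently, all $Z$-eigenvalues of $\bar{\mathcal{B}}$ are nonnegative.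
   Context: A third-order tensor $\mathcal{A}=(a_{ijk})\in\mathbb{R}^{n\times n\times n}$ is called piezoelectric-type if $a_{ijk}=a_{ikj}$ for all $i,j,k\in\{1,\dots,n\}$. For a fourth-order tensor $\mathcal{T}=(t_{i_1i_2i_3i_4})$ and $\mathbf{x}\in\mathbb{R}^n$, $\mathcal{T}\mathbf{x}^3\in\mathbb{R}^n$ is the vector with $i$-th entry $\sum_{i_2,i_3,i_4}t_{ii_2i_3i_4}x_{i_2}x_{i_3}x_{i_4}$. A real number $\lambda$ is a $Z$-eigenvalue of $\mathcal{T}$ if there is $\mathbf{x}\in\mathbb{R}^n$ with $\mathcal{T}\mathbf{x}^3=\lambda\mathbf{x}$ and $\mathbf{x}^T\mathbf{x}=1$. *)

From mathcomp Require Import all_boot all_order all_algebra.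
From mathcomp Require Import reals.
Set Implicit Arguments. Unset Strict Implicit. Unset Printing Implicit Defensive.
Import Order.TTheory GRing.Theory Num.Theory.
Local Open Scope ring_scope.

Definition tensor3 (R : Type) (n : nat) := 'I_n -> 'I_n -> 'I_n -> R.
Definition tensor4 (R : Type) (n : nat) := 'I_n -> 'I_n -> 'I_n -> 'I_n -> R.

Definition piezoelectric_type (R : Type) (n : nat) (A : tensor3 R n) : Prop :=
  forall i j k, A i j k = A i k j.

Definition tensorB (R : pzRingType) (n : nat) (A : tensor3 R n) : tensor4 R n :=
  fun i1 i2 i3 i4 => \sum_(i < n) A i i1 i2 * A i i3 i4.

Definition tensorBbar (R : fieldType) (n : nat) (A : tensor3 R n) : tensor4 R n :=
  fun i1 i2 i3 i4 =>
    3%:R^-1 * (tensorB A i1 i2 i3 i4 + tensorB A i1 i3 i2 i4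
               + tensorB A i1 i4 i2 i3).

Definition tform4 (R : pzRingType) (n : nat) (T : tensor4 R n) (x : 'I_n -> R) : R :=
  \sum_(i1 < n) \sum_(i2 < n) \sum_(i3 < n) \sum_(i4 < n)
     T i1 i2 i3 i4 * x i1 * x i2 * x i3 * x i4.

Definition tapply3 (R : pzRingType) (n : nat) (T : tensor4 R n) (x : 'I_n -> R)
  : 'I_n -> R :=
  fun i => \sum_(i2 < n) \sum_(i3 < n) \sum_(i4 < n)
     T i i2 i3 i4 * x i2 * x i3 * x i4.

Definition positive_semidefinite4 (R : numDomainType) (n : nat) (T : tensor4 R n) : Prop :=
  forall x : 'I_n -> R, 0 <= tform4 T x.

Definition Z_eigenvalue (R : pzRingType) (n : nat) (T : tensor4 R n) (lambda : R) : Prop :=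
  exists x : 'I_n -> R,
    (forall i, tapply3 T x i = lambda * x i) /\ \sum_(i < n) x i * x i = 1.

From mathcomp Require Import all_boot all_order all_algebra.
From mathcomp Require Import reals.
From mathcomp Require Import ring.
Import Order.TTheory GRing.Theory Num.Theory.
Local Open Scope ring_scope.

(** The quartic form of [B] is a sum of squares of quadratic forms,
    [B x^4 = \sum_i (x^T A_i x)^2], and each of the three index permutations
    averaged in [\bar B] leaves the quartic form unchanged, so
    [\bar B x^4 = B x^4 >= 0].  Evaluating the quartic form at a unit
    Z-eigenvector [x] of eigenvalue [lambda] gives [lambda x^T x = lambda]. *)

Definition tform2 {R : pzRingType} {n : nat} (M : 'I_n -> 'I_n -> R)
    (x : 'I_n -> R) : R :=
  \sum_(j < n) \sum_(k < n) M j k * x j * x k.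

Section QuarticForm.
Context {R : comPzRingType} {n : nat}.
Implicit Types (T : tensor4 R n) (x : 'I_n -> R).

Lemma tform4_add T1 T2 x :
  tform4 (fun a b c d => T1 a b c d + T2 a b c d) x = tform4 T1 x + tform4 T2 x.
Proof.
rewrite /tform4 -big_split; apply: eq_bigr => a _.
rewrite -big_split; apply: eq_bigr => b _.
rewrite -big_split; apply: eq_bigr => c _.
rewrite -big_split; apply: eq_bigr => d _ /=; ring.
Qed.

Lemma tform4_scale (k : R) T x :
  tform4 (fun a b c d => k * T a b c d) x = k * tform4 T x.
Proof.
rewrite /tform4 mulr_sumr; apply: eq_bigr => a _.
rewrite mulr_sumr; apply: eq_bigr => b _.
rewrite mulr_sumr; apply: eq_bigr => c _.
rewrite mulr_sumr; apply: eq_bigr => d _; ring.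
Qed.

Lemma tform4_swap23 T x : tform4 (fun a b c d => T a c b d) x = tform4 T x.
Proof.
rewrite /tform4; apply: eq_bigr => a _; rewrite exchange_big.
by apply: eq_bigr => b _; apply: eq_bigr => c _; apply: eq_bigr => d _; ring.
Qed.

Lemma tform4_rot234 T x : tform4 (fun a b c d => T a d b c) x = tform4 T x.
Proof.
rewrite /tform4; apply: eq_bigr => a _.
under eq_bigr => b _ do rewrite exchange_big.
rewrite exchange_big.
by apply: eq_bigr => b _; apply: eq_bigr => c _; apply: eq_bigr => d _; ring.
Qed.

Lemma tform4_tensorB (A : tensor3 R n) x :
  tform4 (tensorB A) x = \sum_(i < n) tform2 (A i) x ^+ 2.
Proof.
transitivity (\sum_(i < n) \sum_(i1 < n) \sum_(i2 < n) \sum_(i3 < n)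
    \sum_(i4 < n) A i i1 i2 * x i1 * x i2 * (A i i3 i4 * x i3 * x i4)); last first.
  apply: eq_bigr => i _; rewrite expr2 /tform2 mulr_suml.
  apply: eq_bigr => i1 _; rewrite mulr_suml.
  apply: eq_bigr => i2 _; rewrite mulr_sumr.
  by apply: eq_bigr => i3 _; rewrite mulr_sumr.
rewrite /tform4 [RHS]exchange_big; apply: eq_bigr => i1 _.
rewrite [RHS]exchange_big; apply: eq_bigr => i2 _.
rewrite [RHS]exchange_big; apply: eq_bigr => i3 _.
rewrite [RHS]exchange_big; apply: eq_bigr => i4 _.
rewrite /tensorB !mulr_suml; apply: eq_bigr => i _; ring.
Qed.

Lemma tform4_tapply3 T x : tform4 T x = \sum_(i < n) x i * tapply3 T x i.
Proof.
apply: eq_bigr => i _; rewrite /tapply3 mulr_sumr.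
apply: eq_bigr => j _; rewrite mulr_sumr.
apply: eq_bigr => k _; rewrite mulr_sumr.
by apply: eq_bigr => l _; ring.
Qed.

End QuarticForm.

Lemma tform4_tensorBbar (R : numFieldType) (n : nat) (A : tensor3 R n)
    (x : 'I_n -> R) :
  tform4 (tensorBbar A) x = tform4 (tensorB A) x.
Proof.
rewrite /tensorBbar tform4_scale !tform4_add.
rewrite (tform4_swap23 (tensorB A)) (tform4_rot234 (tensorB A)).
by field.
Qed.

Lemma tensorBbar_psd (R : realFieldType) (n : nat) (A : tensor3 R n) :
  positive_semidefinite4 (tensorBbar A).
Proof.
move=> x; rewrite tform4_tensorBbar tform4_tensorB.
by apply: sumr_ge0 => i _; apply: sqr_ge0.
Qed.

Lemma Z_eigenvalue_ge0 (R : numDomainType) (n : nat) (T : tensor4 R n)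
    (lambda : R) :
  positive_semidefinite4 T -> Z_eigenvalue T lambda -> 0 <= lambda.
Proof.
move=> psdT [x [eigx normx]].
have <- : tform4 T x = lambda.
  rewrite tform4_tapply3 -[RHS]mulr1 -normx mulr_sumr.
  by apply: eq_bigr => i _; rewrite eigx mulrCA.
exact: psdT.
Qed.

Theorem theorem1p1 (R : realType) (n : nat) (A : tensor3 R n) :
  piezoelectric_type A ->
  positive_semidefinite4 (tensorBbar A) /\
  (forall lambda : R, Z_eigenvalue (tensorBbar A) lambda -> 0 <= lambda).
Proof.
move=> _.
split; first exact: tensorBbar_psd.
by move=> lambda; apply: Z_eigenvalue_ge0; apply: tensorBbar_psd.
Qed.
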